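(* Let $X$ be an Alexandroff space, $Y$ a topological space, $x\in X$, and $f:X\to Y$ a map with closed graph. Then the restriction of $f$ to $[x]_{\Re_X}$ is constant.
   Context: For a map $f:X\to Y$ its graph is $G_f=\{(x,f(x)):x\in X\}$; $f$ has closed graph if $G_f$ is closed in $X\times Y$ (product topology). A topological space $X$ is an Alexandroff space if the intersection of every nonempty family of open subsets of $X$ is open; equivalently, every point $a\in X$ has a smallest open neighbourhood, denoted $V_a$. On an Alexandroff space $X$ define the relation $\Re_X$ by: $(x,y)\in\Re_X$ iff there exist $x=x_1,x_2,\ldots,x_n=y$ in $X$ with $V_{x_i}\cap V_{x_{i+1}}\neq\emptyset$ for all $i\in\{1,\ldots,n-1\}$. This is an equivalence relation, and $[x]_{\Re_X}=\{y\in X:(x,y)\in\Re_X\}$ denotes the equivalence class of $x$. *)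

From HB Require Import structures.
From mathcomp Require Import all_boot all_order.
From mathcomp Require Import boolp classical_sets topology.
Set Implicit Arguments. Unset Strict Implicit. Unset Printing Implicit Defensive.
Local Open Scope classical_set_scope.

Definition alexandroff (X : topologicalType) : Prop :=
  forall (F : set (set X)), F !=set0 -> (forall U, F U -> open U) ->
    open (\bigcap_(U in F) U).

(* V_a : the smallest open neighbourhood of a, i.e. the intersection of all
   open sets containing a (it is open when X is Alexandroff). *)
Definition minnbhd (X : topologicalType) (a : X) : set X :=
  \bigcap_(U in [set U : set X | open U /\ U a]) U.

Definition ReX (X : topologicalType) (x y : X) : Prop :=
  exists (n : nat) (c : nat -> X), c 0 = x /\ c n = y /\
    forall i, (i < n)%N -> minnbhd (c i) `&` minnbhd (c i.+1) !=set0.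

Definition ReX_class (X : topologicalType) (x : X) : set X := [set y | ReX x y].

Definition graph (X Y : Type) (f : X -> Y) : set (X * Y) :=
  [set p | p.2 = f p.1].

Definition closed_graph (X Y : topologicalType) (f : X -> Y) : Prop :=
  closed (graph f).

(* If w lies in V_a, every neighbourhood U x W of (a, f w) contains the graph
   point (w, f w), so (a, f w) is in the closure of the graph; a closed graph
   then forces f w = f a.  Hence f is constant on V_a, so overlapping minimal
   neighbourhoods carry the same value, and induction along a chain shows that
   f is constant on each class of Re_X. *)
From mathcomp Require Import all_boot all_order.
From mathcomp Require Import boolp classical_sets topology.
Set Implicit Arguments. Unset Strict Implicit. Unset Printing Implicit Defensive.
Local Open Scope classical_set_scope.

Section ClosedGraph.
Variables (X Y : topologicalType) (f : X -> Y).
Hypothesis cgf : closed_graph f.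

Lemma closed_graph_minnbhd (a w : X) : minnbhd a w -> f w = f a.
Proof.
move=> Vaw; suff : graph f (a, f w) by [].
apply: cgf => B [[P Q] /= [Pa Qfw] PQB].
have [U [oU Ua] UP] : exists2 U, open U /\ U a & U `<=` P by move: Pa; rewrite nbhsE.
exists (w, f w); split=> //; apply: PQB; split=> /=.
- by apply: UP; apply: Vaw.
- exact: nbhs_singleton Qfw.
Qed.

Lemma closed_graph_minnbhd_meet (a b : X) :
  minnbhd a `&` minnbhd b !=set0 -> f a = f b.
Proof.
by move=> [w [Vaw Vbw]]; rewrite -(closed_graph_minnbhd Vaw) (closed_graph_minnbhd Vbw).
Qed.

Lemma closed_graph_ReX (x y : X) : ReX x y -> f x = f y.
Proof.
move=> [n [c [<- [<- meet]]]].
elim: n meet => [//|n IHn] meet.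
rewrite IHn; last by move=> i lt_in; apply: meet; exact: ltnW.
exact/closed_graph_minnbhd_meet/meet.
Qed.

End ClosedGraph.

(* The Alexandroff hypothesis only guarantees that V_a is open; the argument
   uses V_a merely as the intersection of the open neighbourhoods of a. *)
Theorem lemma3p3 (X Y : topologicalType) (x : X) (f : X -> Y) :
  alexandroff X -> closed_graph f ->
  forall y z, ReX_class x y -> ReX_class x z -> f y = f z.
Proof.
move=> _ cgf y z xy xz.
by rewrite -(closed_graph_ReX cgf xy) (closed_graph_ReX cgf xz).
Qed.
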